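(* There is an absolute constant $c_0>0$ such that for every $\epsilon\in(0,1/2]$ and every integer $d\ge 1$, with $n=2^{d+1}-2$, the binary-tree function $f:\{0,1\}^n\to\{0,1\}$ of depth $d$ (which is computable by a read-once formula) satisfies, under unit costs ($c_i=1$ for all $i$) and $p_i=\frac{1+\epsilon}{2}$ for all $i$, $$\mathsf{OPT}_{\mathcal N}(f,c,p)\ge c_0\,\epsilon^3\, n^{1-2\epsilon/\ln 2}\cdot \mathsf{OPT}_{\mathcal A}(f,c,p).$$
   Context: Stochastic Boolean Function Evaluation (SBFE) setup: $f:\{0,1\}^n\to\{0,1\}$ is a known Boolean function, $c\in\mathbb{R}_{>0}^n$ a cost vector and $p\in(0,1)^n$ a probability vector. The unknown input $x\in\{0,1\}^n$ is random with independent coordinates and $\Pr(x_i=1)=p_i$. The value $x_i$ can only be learned by testing variable $i$, at cost $c_i$. A strategy tests variables sequentially until $f(x)$ is determined, i.e. until $f(x')=f(x)$ for every $x'$ agreeing with $x$ on all tested coordinates. An adaptive strategy is a decision tree (the next test may depend on previous outcomes); a non-adaptive strategy is a fixed permutation of $[n]$, with variables tested in that order until $f(x)$ is determined. $\mathrm{cost}_{c,p}(f,S)$ is the expected total cost of tests performed by $S$ for random $x$. $\mathsf{OPT}_{\mathcal A}(f,c,p)$ (resp. $\mathsf{OPT}_{\mathcal N}(f,c,p)$) is the minimum of $\mathrm{cost}_{c,p}(f,S)$ over all adaptive (resp. non-adaptive) strategies. Binary-tree function of depth $d$: take the complete binary tree of depth $d$ (root at depth $0$, $2^d$ leaves at depth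 $d$); it has $n=2^{d+1}-2$ edges, numbered $1,\dots,n$, and variable $x_i$ is associated with edge $i$. A leaf is alive if $x_i=1$ for every edge $i$ on the path from the root to that leaf. Then $f(x)=1$ iff at least one leaf is alive. (A read-once formula is a tree whose internal nodes are labeled $\wedge$ or $\vee$ and whose leaves are labeled by distinct variables.) *)

From HB Require Import structures.
From mathcomp Require Import all_boot all_order all_algebra.
From mathcomp Require Import all_classical all_reals.
From mathcomp Require Import exp.
From mathcomp Require Import fingroup perm.
From mathcomp Require Import Rstruct.

Set Implicit Arguments.
Unset Strict Implicit.
Unset Printing Implicit Defensive.

Import Order.TTheory GRing.Theory Num.Theory.
Local Open Scope ring_scope.

Definition input (n : nat) := {ffun 'I_n -> bool}.

Section SBFE.
Variable R : realType.
Variable n : nat.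
Variable f : input n -> bool.
Variable c : 'I_n -> R.
Variable p : 'I_n -> R.

Definition prob (x : input n) : R :=
  \prod_(i < n) (if x i then p i else 1 - p i).

Definition determined (S : {set 'I_n}) (x : input n) : bool :=
  [forall y : input n, [forall i in S, y i == x i] ==> (f y == f x)].

(* Adaptive strategies: decision trees.  At Node i t0 t1, variable i is
   tested, and one continues with t1 if x_i = 1, with t0 otherwise. *)
Inductive dtree := Leaf | Node of 'I_n & dtree & dtree.

Fixpoint run_ok (t : dtree) (x : input n) (S : {set 'I_n}) : bool :=
  determined S x ||
  (match t with
   | Leaf => false
   | Node i t0 t1 => run_ok (if x i then t1 else t0) x (i |: S)
   end).

Fixpoint run_cost (t : dtree) (x : input n) (S : {set 'I_n}) : R :=
  if determined S x then 0 else
  match t with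
  | Leaf => 0
  | Node i t0 t1 => c i + run_cost (if x i then t1 else t0) x (i |: S)
  end.

Definition valid_tree (t : dtree) : Prop := forall x : input n, run_ok t x (finset.set0).

Definition cost_adaptive (t : dtree) : R :=
  \sum_(x : input n) prob x * run_cost t x (finset.set0).

(* Non-adaptive strategies: a permutation s of [n]; variables s 0, s 1, ...
   are tested in that order until f(x) is determined. *)
Definition first_tested (s : {perm 'I_n}) (k : nat) : {set 'I_n} :=
  [set s j | j : 'I_n & (j < k)%N].

Definition nonadaptive_run_cost (s : {perm 'I_n}) (x : input n) : R :=
  \sum_(k < n) (if determined (first_tested s k) x then 0 else c (s k)).

Definition cost_nonadaptive (s : {perm 'I_n}) : R :=
  \sum_(x : input n) prob x * nonadaptive_run_cost s x.

Definition OPT_A : R :=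
  inf [set r : R | exists t : dtree, valid_tree t /\ r = cost_adaptive t].

Definition OPT_N : R :=
  inf [set r : R | exists s : {perm 'I_n}, r = cost_nonadaptive s].

End SBFE.

(* Nodes of the complete binary tree are
   numbered in heap order 1 .. 2^(d+1)-1 (root 1, children of v are 2v, 2v+1);
   the edge from the parent of node v (v >= 2) to v is variable v-2, so the
   n = 2^(d+1)-2 edges are the variables 0 .. n-1.  Leaves are the nodes
   2^d + l, l < 2^d; the edges on the root-to-leaf path of node v are those
   entering v / 2^k for k < d. *)
Definition nedges (d : nat) : nat := (2 ^ d.+1 - 2)%N.

Definition bit_at (n : nat) (x : input n) (j : nat) : bool :=
  [exists i : 'I_n, (nat_of_ord i == j) && x i].

Definition binary_tree_fun (d : nat) (x : input (nedges d)) : bool :=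
  [exists l : 'I_(2 ^ d),
     [forall k : 'I_d, bit_at x ((2 ^ d + l) %/ 2 ^ k - 2)%N]].

From HB Require Import structures.
From mathcomp Require Import all_boot all_order all_algebra.
From mathcomp Require Import all_classical all_reals.
From mathcomp Require Import sequences exp.
From mathcomp Require Import fingroup perm.
From mathcomp Require Import Rstruct.
From mathcomp Require Import ring lra zify.

(* Let q = (1 + eps)/2.  Adaptively, scan the edges in heap order and test an
   edge only when the edges above it are already known to be 1: the expected
   cost is the expected number of edges hanging below reachable nodes, at most
   2 (2q)^d / (2q - 1).  Non-adaptively, a tested set T can certify f(x) = 1
   only if it contains a root-leaf path of ones, which has probability at most
   |T| q^d.  As Pr[f = 1] >= (2q - 1)/q by the second moment method applied to
   the number of alive leaves, the k-th test is performed with probability at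
   least (2q - 1)/q - k q^d, and summing over k gives a cost of order
   ((2q - 1)/q)^2 / q^d.  The two bounds differ by a factor of order
   eps^3 2^d / (1 + eps)^(2d) >= eps^3 n^(1 - 2 eps / ln 2). *)

Set Implicit Arguments.
Unset Strict Implicit.
Unset Printing Implicit Defensive.

Import Order.TTheory GRing.Theory Num.Theory.
Local Open Scope ring_scope.

Section ProductDistribution.
Variables (R : realType) (n : nat) (p : 'I_n -> R).

Lemma sum_prob_forall_in (S : {set 'I_n}) :
  \sum_(x : input n) prob p x * ([forall i in S, x i] : bool)%:R = \prod_(i in S) p i.
Proof.
pose F (i : 'I_n) (b : bool) :=
  (if b then p i else 1 - p i) * (if i \in S then b%:R else 1).
transitivity (\sum_(x : input n) \prod_i F i (x i)).
  apply: eq_bigr => x _; rewrite /prob /F big_split /=; congr (_ * _).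
  case: (boolP [forall i in S, x i]) => [/forall_inP xS|/forall_inPn [i iS xi]].
    by rewrite big1 // => i _; case: ifP => // /xS ->.
  by rewrite (bigD1 i) //= iS (negbTE xi) mul0r.
rewrite -bigA_distr_bigA /= (big_mkcond (mem S)) /=; apply: eq_bigr => i _.
by rewrite big_bool /F /=; case: (i \in S); lra.
Qed.

Lemma prob_ge0 (x : input n) : (forall i, 0 <= p i <= 1) -> 0 <= prob p x.
Proof.
move=> p01; apply: prodr_ge0 => i _; have /andP[p0 p1] := p01 i.
by case: (x i); lra.
Qed.

End ProductDistribution.

Lemma bit_atE (n : nat) (x : input n) (e : 'I_n) : bit_at x e = x e.
Proof.
apply/existsP/idP => [[i /andP[/eqP ie xi]]|xe]; last by exists e; rewrite eqxx.
by rewrite -(val_inj ie).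
Qed.

Lemma bit_at_ord (n : nat) (x : input n) (k : nat) (klt : (k < n)%N) :
  bit_at x k = x (Ordinal klt).
Proof. exact: (bit_atE x (Ordinal klt)). Qed.

Local Open Scope nat_scope.

Lemma ancestor_ge2 (v i j : nat) : 2 ^ j <= v -> i < j -> 2 <= v %/ 2 ^ i.
Proof.
move=> jv ij; rewrite leq_divRL ?expn_gt0 //; apply: leq_trans jv.
by rewrite mulnC -expnSr leq_exp2l.
Qed.

Lemma ltn_div_exp2 (v i i' : nat) : 0 < v %/ 2 ^ i -> i < i' -> v %/ 2 ^ i' < v %/ 2 ^ i.
Proof.
move=> vi ii'; apply: (@leq_trans (v %/ 2 ^ i.+1).+1).
  by rewrite ltnS leq_div2l ?expn_gt0 // leq_exp2l.
by rewrite expnS mulnC divnMA ltn_Pdiv.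
Qed.

Lemma div_exp2_inj (v i i' : nat) : 0 < v %/ 2 ^ i -> 0 < v %/ 2 ^ i' ->
  v %/ 2 ^ i = v %/ 2 ^ i' -> i = i'.
Proof.
move=> vi vi' e; case: (ltngtP i i') => // ii'.
  by have := ltn_div_exp2 vi ii'; rewrite e ltnn.
by have := ltn_div_exp2 vi' ii'; rewrite e ltnn.
Qed.

Lemma div_exp2_bounds (v i j : nat) : 2 ^ j <= v < 2 ^ j.+1 -> i <= j ->
  2 ^ (j - i) <= v %/ 2 ^ i < 2 ^ (j - i).+1.
Proof.
move=> /andP[v1 v2] ij; apply/andP; split.
  by rewrite leq_divRL ?expn_gt0 // -expnD subnK.
by rewrite ltn_divLR ?expn_gt0 // -expnD addSn subnK.
Qed.

Lemma nedgesE (d : nat) : (nedges d).+2 = 2 ^ d.+1.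
Proof.
have : 2 <= 2 ^ d.+1 by rewrite -[2]expn1 leq_exp2l.
by rewrite /nedges; lia.
Qed.

Lemma exp2_le_nedges (d : nat) : 0 < d -> 2 ^ d <= nedges d.
Proof.
move=> d_gt0; have : 2 <= 2 ^ d by rewrite -[2]expn1 leq_exp2l.
by rewrite /nedges expnS; lia.
Qed.

Lemma nedges_le (d : nat) : nedges d <= 2 * 2 ^ d.
Proof. by rewrite /nedges -expnS leq_subr. Qed.

Section HeapPaths.
Variable d : nat.
Hypothesis d_gt0 : 0 < d.
Local Notation n := (nedges d).

Lemma nedges_gt0 : 0 < n.
Proof.
have : 2 ^ 2 <= 2 ^ d.+1 by rewrite leq_exp2l.
by have := nedgesE d; lia.
Qed.

Lemma ancestor_edge_lt (v i : nat) : v < 2 ^ d.+1 -> v %/ 2 ^ i - 2 < n.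
Proof.
rewrite -nedgesE => vlt; have := leq_div v (2 ^ i); have := nedges_gt0; lia.
Qed.

(* The edge entering node w is the variable w - 2, so these are the first j
   edges on the way from node v up to the root. *)
Definition path_edges (v j : nat) : {set 'I_n} :=
  [set e : 'I_n | [exists i : 'I_j, val e == v %/ 2 ^ i - 2]].

Lemma forall_bit_at_path_edges (x : input n) (v j : nat) : v < 2 ^ d.+1 ->
  [forall i : 'I_j, bit_at x (v %/ 2 ^ i - 2)] = [forall e in path_edges v j, x e].
Proof.
move=> vlt; apply/forallP/forall_inP => [xv e|xv i].
  rewrite inE => /existsP[i /eqP ei].
  by have := xv i; rewrite (bit_at_ord _ (ancestor_edge_lt i vlt)); congr (x _); apply: val_inj.
rewrite (bit_at_ord _ (ancestor_edge_lt i vlt)); apply: xv.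
by rewrite inE; apply/existsP; exists i.
Qed.

Lemma card_path_edges (v j : nat) : 2 ^ j <= v -> v < 2 ^ d.+1 -> #|path_edges v j| = j.
Proof.
move=> jv vlt; pose e0 : 'I_n := Ordinal nedges_gt0.
pose g (i : 'I_j) := insubd e0 (v %/ 2 ^ i - 2).
have gE i : val (g i) = v %/ 2 ^ i - 2 by rewrite /g val_insubd ancestor_edge_lt.
have -> : path_edges v j = [set g i | i : 'I_j].
  apply/setP => e; rewrite inE; apply/existsP/imsetP => [[i /eqP ei]|[i _ ->]].
    by exists i => //; apply: val_inj; rewrite gE.
  by exists i; rewrite gE.
rewrite card_imset ?cardsT ?card_ord // => i i' /(congr1 val); rewrite !gE => e.
have := ancestor_ge2 jv (ltn_ord i); have := ancestor_ge2 jv (ltn_ord i').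
by move=> h h'; apply: val_inj; apply: (@div_exp2_inj v); lia.
Qed.

End HeapPaths.

Section LeafNodes.
Variable d : nat.

Definition leaf_node (l : 'I_(2 ^ d)) : nat := 2 ^ d + l.

Lemma leaf_node_bounds (l : 'I_(2 ^ d)) : 2 ^ d <= leaf_node l < 2 ^ d.+1.
Proof. by rewrite /leaf_node leq_addr /= expnS mul2n -addnn ltn_add2l ltn_ord. Qed.

Definition share_ancestor (l l' : 'I_(2 ^ d)) (j : nat) : bool :=
  leaf_node l %/ 2 ^ j == leaf_node l' %/ 2 ^ j.

Lemma share_ancestor_root l l' : share_ancestor l l' d.
Proof.
have := div_exp2_bounds (leaf_node_bounds l) (leqnn d).
have := div_exp2_bounds (leaf_node_bounds l') (leqnn d).
rewrite subnn expn0 expn1 /share_ancestor.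
by move: (_ %/ _) (_ %/ _) => a b; lia.
Qed.

Lemma share_ancestor_mono l l' j k : j <= k -> share_ancestor l l' j -> share_ancestor l l' k.
Proof. by move=> jk /eqP e; apply/eqP; rewrite -(subnKC jk) expnD !divnMA e. Qed.

Lemma card_share_ancestor l j : #|[set l' | share_ancestor l l' j]| <= 2 ^ j.
Proof.
have j_gt0 : 0 < 2 ^ j by rewrite expn_gt0.
pose g (l' : 'I_(2 ^ d)) := Ordinal (ltn_pmod (leaf_node l') j_gt0).
rewrite -[X in _ <= X]card_ord; apply: (leq_card_in g) => a b.
rewrite !inE => /eqP ea /eqP eb /(congr1 val) /= em.
apply: ord_inj; have := divn_eq (leaf_node a) (2 ^ j); have := divn_eq (leaf_node b) (2 ^ j).
by rewrite -ea -eb em /leaf_node; move: (_ * _) (_ %% _) => X Y; lia.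
Qed.

End LeafNodes.

Section LeafPaths.
Variable d : nat.
Hypothesis d_gt0 : 0 < d.
Local Notation n := (nedges d).

Definition leaf_path (l : 'I_(2 ^ d)) : {set 'I_n} := path_edges d (leaf_node l) d.

Lemma card_leaf_path l : #|leaf_path l| = d.
Proof. by have /andP[l1 l2] := leaf_node_bounds l; rewrite card_path_edges. Qed.

Lemma binary_tree_funE (x : input n) :
  binary_tree_fun x = [exists l, [forall e in leaf_path l, x e]].
Proof.
apply: eq_existsb => l; have /andP[_ l2] := leaf_node_bounds l.
by rewrite -forall_bit_at_path_edges.
Qed.

(* Two leaf paths separating below height [m] share only their top edges. *)
Lemma card_leaf_path_union l l' (m : nat) : m <= d ->
  (forall k, k < m -> ~~ share_ancestor l l' k) -> d + m <= #|leaf_path l :|: leaf_path l'|.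
Proof.
move=> md apart.
have sub : leaf_path l :|: path_edges d (leaf_node l') m \subset leaf_path l :|: leaf_path l'.
  apply/fintype.subsetP => e; rewrite !inE => /orP[->//|/existsP[i ei]].
  by apply/orP; right; apply/existsP; exists (widen_ord md i).
apply: leq_trans (subset_leq_card sub).
have /andP[a1 a2] := leaf_node_bounds l; have /andP[b1 b2] := leaf_node_bounds l'.
rewrite cardsU card_leaf_path card_path_edges //; last first.
  by apply: leq_trans b1; rewrite leq_exp2l.
suff -> : #|leaf_path l :&: path_edges d (leaf_node l') m| = 0 by rewrite subn0.
apply/eqP; rewrite cards_eq0; apply/eqP/setP => e; rewrite !inE.
apply/negP => /andP[/existsP[i /eqP ei] /existsP[k /eqP ek]].
have km : k <= d by apply: leq_trans (ltnW (ltn_ord k)) md.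
have g1 := ancestor_ge2 a1 (ltn_ord i).
have g2 : 2 <= leaf_node l' %/ 2 ^ k by apply: (ancestor_ge2 b1); apply: leq_trans (ltn_ord k) md.
have ee : leaf_node l %/ 2 ^ i = leaf_node l' %/ 2 ^ k by lia.
have hi := div_exp2_bounds (leaf_node_bounds l) (ltnW (ltn_ord i)).
have hk := div_exp2_bounds (leaf_node_bounds l') km.
rewrite ee in hi; have := trunc_log_eq (ltnSn 1) hi; rewrite (trunc_log_eq (ltnSn 1) hk) => ed.
have ik : nat_of_ord i = k by have := ltn_ord i; lia.
by have := apart k (ltn_ord k); rewrite /share_ancestor -{1}ik ee eqxx.
Qed.

Definition leaf_edge (l : 'I_(2 ^ d)) : 'I_n :=
  Ordinal (ancestor_edge_lt d_gt0 0 (proj2 (andP (leaf_node_bounds l)))).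

Lemma leaf_edge_in l : leaf_edge l \in leaf_path l.
Proof. by rewrite inE; apply/existsP; exists (Ordinal d_gt0). Qed.

Lemma leaf_edge_inj : injective leaf_edge.
Proof.
move=> l l' /(congr1 val) /=; rewrite expn0 !divn1.
have : 2 <= 2 ^ d by rewrite -[2]expn1 leq_exp2l.
by rewrite /leaf_node => d2 e; apply: ord_inj; lia.
Qed.

Lemma card_leaf_paths_subset (T : {set 'I_n}) : #|[pred l | leaf_path l \subset T]| <= #|T|.
Proof.
rewrite -(card_in_imset (f := leaf_edge)); last by move=> a b _ _; apply: leaf_edge_inj.
apply: subset_leq_card; apply/fintype.subsetP => e /imsetP[l lT ->].
by move: lT; rewrite inE => /fintype.subsetP; apply; apply: leaf_edge_in.
Qed.

End LeafPaths.
Local Open Scope ring_scope.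

(* Second moment method, through the pointwise bound [z <= t/2 + z^2/(2t)]. *)
Lemma second_moment_method (R : realType) (T : finType) (w Z : T -> R) (P : pred T) (mu t : R) :
  (forall x, 0 <= w x) -> (forall x, ~~ P x -> Z x = 0) -> 0 < t ->
  \sum_x w x * Z x = mu -> \sum_x w x * Z x ^+ 2 <= mu * t ->
  mu / t <= \sum_x w x * (P x)%:R.
Proof.
move=> w0 ZP t0 mean second; set S := \sum_x _.
have pointwise x : Z x <= t / 2 * (P x)%:R + Z x ^+ 2 / (2 * t).
  case: (boolP (P x)) => Px; last by rewrite ZP // expr0n /= mul0r mulr0 addr0.
  rewrite mulr1n.
  have : 0 <= (Z x - t) ^+ 2 / (2 * t) by apply: divr_ge0; [apply: sqr_ge0 | lra].
  suff -> : (Z x - t) ^+ 2 / (2 * t) = t / 2 * 1 + Z x ^+ 2 / (2 * t) - Z x by lra.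
  by field; lra.
have split_sum : \sum_x w x * (t / 2 * (P x)%:R + Z x ^+ 2 / (2 * t)) =
    t / 2 * S + (\sum_x w x * Z x ^+ 2) / (2 * t).
  rewrite big_distrr mulr_suml -big_split; apply: eq_bigr => x _ /=; field; lra.
have : mu <= t / 2 * S + mu * t / (2 * t).
  rewrite -{1}mean; apply: le_trans (ler_sum _ (fun x _ => ler_wpM2l (w0 x) (pointwise x))) _.
  by rewrite split_sum lerD2l ler_pM2r // invr_gt0 mulr_gt0.
have -> : mu * t / (2 * t) = mu / 2 by field; lra.
by rewrite ler_pdivrMr //; nra.
Qed.

Lemma exprn_telescope (R : realType) (q : R) (m D : nat) : (m <= D)%N ->
  q ^+ m = \sum_(j < D) (q ^+ j - q ^+ j.+1) * ((m <= j)%N : bool)%:R + q ^+ D.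
Proof.
move=> mD; rewrite -(big_mkord xpredT (fun j => (q ^+ j - q ^+ j.+1) * ((m <= j)%N : bool)%:R)).
rewrite (big_cat_nat (leq0n m) mD) /= big1_seq ?add0r; last first.
  by move=> j /andP[_]; rewrite mem_index_iota => /andP[_ jm]; rewrite leqNgt jm mulr0.
rewrite (@telescope_sumr_eq _ m D (fun k => - q ^+ k)) //; first by rewrite opprK; lra.
by move=> k /andP[mk kD]; rewrite mk mulr1; lra.
Qed.

Section AliveLeaves.
Variables (R : realType) (d : nat) (q : R).
Hypothesis d_gt0 : (0 < d)%N.
Hypotheses (q_ge0 : 0 <= q) (q_le1 : q <= 1).
Local Notation n := (nedges d).
Local Notation p := (fun _ : 'I_n => q).

Lemma sum_prob_all_ones (S : {set 'I_n}) :
  \sum_(x : input n) prob p x * ([forall e in S, x e] : bool)%:R = q ^+ #|S|.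
Proof. by rewrite sum_prob_forall_in prodr_const. Qed.

Definition alive_count (x : input n) : R :=
  \sum_l ([forall e in leaf_path l, x e] : bool)%:R.

Lemma mean_alive_count : \sum_(x : input n) prob p x * alive_count x = (2 ^ d)%:R * q ^+ d.
Proof.
under eq_bigr do rewrite /alive_count big_distrr /=.
rewrite exchange_big /=.
under eq_bigr do rewrite sum_prob_all_ones (card_leaf_path d_gt0).
by rewrite sumr_const card_ord mulr_natl.
Qed.

Lemma exp_card_leaf_path_union (l l' : 'I_(2 ^ d)) :
  q ^+ #|leaf_path l :|: leaf_path l'| <=
  q ^+ d * (\sum_(j < d) (q ^+ j - q ^+ j.+1) * (share_ancestor l l' j : bool)%:R + q ^+ d).
Proof.
have [m share_m first_m] := ex_minnP (ex_intro _ d (share_ancestor_root l l')).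
have md : (m <= d)%N by apply: first_m; apply: share_ancestor_root.
have apart k : (k < m)%N -> ~~ share_ancestor l l' k.
  by move=> km; apply/negP => /first_m; rewrite leqNgt km.
have -> : \sum_(j < d) (q ^+ j - q ^+ j.+1) * (share_ancestor l l' j : bool)%:R =
          \sum_(j < d) (q ^+ j - q ^+ j.+1) * ((m <= j)%N : bool)%:R.
  apply: eq_bigr => j _; case: (leqP m j) => [mj|jm].
    by rewrite (share_ancestor_mono mj share_m).
  by rewrite (negbTE (apart j jm)).
rewrite -exprn_telescope // -exprD; apply: ler_wiXn2l => //.
exact: card_leaf_path_union.
Qed.

Lemma sqr_alive_count (x : input n) : alive_count x ^+ 2 =
  \sum_l \sum_l' ([forall e in leaf_path l :|: leaf_path l', x e] : bool)%:R.
Proof.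
rewrite expr2 /alive_count big_distrl /=; apply: eq_bigr => l _.
rewrite big_distrr /=; apply: eq_bigr => l' _; rewrite -natrM mulnb.
congr ((nat_of_bool _)%:R); apply/andP/forall_inP => [[/forall_inP ll /forall_inP ll'] e|lu].
  by rewrite inE => /orP[/ll|/ll'].
by split; apply/forall_inP => e le; apply: lu; rewrite inE le ?orbT.
Qed.

Definition second_moment_factor : R :=
  \sum_(j < d) (q ^+ j - q ^+ j.+1) * (2 ^ j)%:R + q ^+ d * (2 ^ d)%:R.

Lemma second_moment_alive_count :
  \sum_(x : input n) prob p x * alive_count x ^+ 2 <=
  (2 ^ d)%:R * q ^+ d * second_moment_factor.
Proof.
under eq_bigr do rewrite sqr_alive_count big_distrr /=.
rewrite exchange_big /=.
apply: le_trans (_ : \sum_(l : 'I_(2 ^ d)) q ^+ d * second_moment_factor <= _); last first.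
  by rewrite sumr_const card_ord mulr_natl mulrnAl.
apply: ler_sum => l _.
under eq_bigr do rewrite big_distrr /=.
rewrite exchange_big /=.
under eq_bigr do rewrite sum_prob_all_ones.
apply: le_trans (ler_sum _ (fun l' _ => exp_card_leaf_path_union l l')) _.
rewrite -big_distrr /= ler_wpM2l ?exprn_ge0 // big_split /= exchange_big /=.
rewrite /second_moment_factor sumr_const card_ord mulr_natr lerD //.
apply: ler_sum => j _; rewrite -big_distrr /= ler_wpM2l //.
  by rewrite subr_ge0 exprSr ler_piMr ?exprn_ge0.
rewrite -natr_sum ler_nat; apply: leq_trans (card_share_ancestor l j).
rewrite -sum1_card [X in (_ <= X)%N]big_mkcond /=; apply: eq_leq.
by apply: eq_bigr => l' _; rewrite inE; case: share_ancestor.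
Qed.

End AliveLeaves.

Lemma second_moment_factor_le (R : realType) (q : R) (D : nat) : 1 / 2 < q -> q <= 1 ->
  second_moment_factor D q <= (2 * q) ^+ D * q / (2 * q - 1).
Proof.
move=> q_gt q_le1; have q21 : 0 < 2 * q - 1 by lra.
rewrite /second_moment_factor; elim: D => [|D IH].
  by rewrite big_ord0 !expr0 expn0 add0r !mul1r ler_pdivlMr //; lra.
rewrite big_ord_recr /=.
have e k : (2 * q) ^+ k = (2 ^ k)%:R * q ^+ k by rewrite exprMn natrX.
rewrite e in IH; rewrite e exprS expnS natrM.
set S := \sum_(i < D) _ in IH *; set a := (2 ^ D)%:R in IH *; set b := q ^+ D in IH *.
have -> : 2%:R * a * (q * b) * q / (2 * q - 1) = a * b * q / (2 * q - 1) + q * (a * b).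
  by field; lra.
suff -> : S + (b - q * b) * a + q * b * (2 * a) = S + b * a + q * (a * b) by lra.
by ring.
Qed.

Lemma prob_binary_tree_fun_ge (R : realType) (d : nat) (q : R) :
  (0 < d)%N -> 1 / 2 < q -> q <= 1 ->
  (2 * q - 1) / q <=
  \sum_(x : input (nedges d)) prob (fun _ => q) x * (binary_tree_fun x : bool)%:R.
Proof.
move=> d_gt0 q_gt q_le1.
have q0 : 0 <= q by lra.
have q01 : 0 <= q <= 1 by rewrite q0 q_le1.
have q21 : 0 < 2 * q - 1 by lra.
have t_le := second_moment_factor_le d q_gt q_le1.
have t_gt0 : 0 < second_moment_factor d q.
  rewrite /second_moment_factor ltr_pwDr ?mulr_gt0 ?exprn_gt0 ?ltr0n ?expn_gt0 //; first lra.
  apply: sumr_ge0 => j _; apply: mulr_ge0 => //.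
  by rewrite subr_ge0 exprSr ler_piMr ?exprn_ge0 //; lra.
have dead (x : input (nedges d)) : ~~ binary_tree_fun x -> alive_count R x = 0.
  by rewrite binary_tree_funE // => /existsPn dead; apply: big1 => l _; rewrite (negbTE (dead l)).
apply: le_trans (second_moment_method (fun x => prob_ge0 x (fun _ => q01)) dead t_gt0
  (mean_alive_count q d_gt0) (second_moment_alive_count d_gt0 q0 q_le1)).
rewrite ler_pdivlMr // mulrAC ler_pdivrMr; last lra.
by move: t_le; rewrite exprMn natrX ler_pdivlMr // mulrC.
Qed.

Lemma sum_ge_linear_lb (R : realType) (a : nat -> R) (th b : R) (K : nat) :
  (forall k, (k < K)%N -> th - k%:R * b <= a k) -> 0 <= b ->
  K%:R * th - b * K%:R ^+ 2 / 2 <= \sum_(0 <= k < K) a k.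
Proof.
move=> a_ge b0; elim: K a_ge => [|K IH] a_ge.
  by rewrite big_geq // mul0r expr0n /= mulr0 mul0r subr0.
rewrite big_nat_recr //= -natr1.
have := IH (fun k kK => a_ge k (ltnW kK)); have := a_ge K (ltnSn K).
have -> : (K%:R + 1) * th - b * (K%:R + 1) ^+ 2 / 2 =
  K%:R * th - b * K%:R ^+ 2 / 2 + (th - K%:R * b) - b / 2 by field.
by lra.
Qed.

(* Summing the lower bound [th - k b] over the [th / b] indices where it is
   positive. *)
Lemma sum_ge_sqr_lb (R : realType) (a : nat -> R) (th b : R) (N : nat) :
  (forall k, 0 <= a k) -> (forall k, th - k%:R * b <= a k) -> 0 < b -> 0 < th ->
  th <= N%:R * b -> th ^+ 2 / (4 * b) <= \sum_(0 <= k < N) a k.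
Proof.
move=> a0 a_ge b0 th0 thN.
have N_gt0 : (0 < N)%N by case: N thN => [|//]; rewrite mul0r; lra.
have sum_ge K : (K <= N)%N -> \sum_(0 <= k < K) a k <= \sum_(0 <= k < N) a k.
  by move=> KN; rewrite (big_cat_nat (leq0n K) KN) /= lerDl sumr_ge0.
pose P K := (K%:R * b <= th) && (K <= N)%N.
have P0 : P 0%N by rewrite /P mul0r (ltW th0).
have P_le K : P K -> (K <= N)%N by case/andP.
have [K /andP[Kth KN] Kmax] := ex_maxnP (ex_intro P 0%N P0) P_le.
have th_le : th <= K.+1%:R * b.
  case: (ltnP K N) => [KN'|NK].
    rewrite leNgt; apply/negP => Kth'.
    by have := Kmax K.+1; rewrite /P (ltW Kth') KN' ltnn => /(_ isT).
  by apply: le_trans thN _; apply: ler_wpM2r; [exact: ltW | rewrite ler_nat leqW].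
case: (posnP K) => [K0|K_gt0].
  apply: le_trans (_ : th <= _).
    rewrite K0 mul1r in th_le; rewrite ler_pdivrMr ?mulr_gt0 //; nra.
  apply: le_trans (sum_ge 1%N N_gt0); rewrite big_nat1.
  by have := a_ge 0%N; rewrite mul0r subr0.
apply: le_trans (sum_ge K KN); apply: le_trans (sum_ge_linear_lb (fun k _ => a_ge k) (ltW b0)).
have K1 : 1 <= K%:R :> R by rewrite ler1n.
have th_le2 : th <= 2 * (K%:R * b) by rewrite -natr1 in th_le; nra.
have : 0 <= (th - K%:R * b) * (3 * (K%:R * b) - th) by apply: mulr_ge0; lra.
rewrite ler_pdivrMr ?mulr_gt0 //; nra.
Qed.

Lemma cost_nonadaptive_unit (R : realType) (n : nat) (f : input n -> bool) (p : 'I_n -> R)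
    (s : {perm 'I_n}) :
  cost_nonadaptive f (fun _ => 1) p s =
  \sum_(0 <= k < n) \sum_(x : input n) prob p x * (~~ determined f (first_tested s k) x : bool)%:R.
Proof.
rewrite /cost_nonadaptive big_mkord.
under eq_bigr do rewrite /nonadaptive_run_cost big_distrr /=.
rewrite exchange_big /=; apply: eq_bigr => k _; apply: eq_bigr => x _.
by case: determined; rewrite /= ?mulr0 ?mulr1.
Qed.

Lemma card_first_tested (n : nat) (s : {perm 'I_n}) (k : nat) : (#|first_tested s k| <= k)%N.
Proof.
apply: leq_trans (leq_imset_card _ _) _.
case: k => [|k]; first by rewrite leqn0 cards_eq0; apply/eqP/setP => j; rewrite !inE.
rewrite -[X in (_ <= X)%N]card_ord.
apply: (leq_card_in (fun j : 'I_n => (inord j : 'I_k.+1))) => a b.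
by rewrite !inE => ak bk /(congr1 (@nat_of_ord _)); rewrite !inordK //; apply: ord_inj.
Qed.

Section NonAdaptive.
Variable d : nat.
Hypothesis d_gt0 : (0 < d)%N.
Local Notation n := (nedges d).
Local Notation f := (@binary_tree_fun d).

Lemma determined_one_witness (T : {set 'I_n}) (x : input n) :
  determined f T x -> f x -> exists l, (leaf_path l \subset T) && [forall e in leaf_path l, x e].
Proof.
move=> /forallP /(_ [ffun i => (i \in T) && x i]) /implyP det fx.
have : f [ffun i => (i \in T) && x i].
  by rewrite (eqP (det _)) //; apply/forall_inP => i iT; rewrite ffunE iT.
rewrite binary_tree_funE // => /existsP[l /forall_inP lT]; exists l; apply/andP; split.
  by apply/fintype.subsetP => e /lT; rewrite ffunE => /andP[].
by apply/forall_inP => e /lT; rewrite ffunE => /andP[].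
Qed.

Lemma prob_determined_one_le (R : realType) (q : R) (T : {set 'I_n}) : 0 <= q <= 1 ->
  \sum_(x : input n) prob (fun _ => q) x * (determined f T x && f x : bool)%:R <= #|T|%:R * q ^+ d.
Proof.
move=> q01; have q0 : 0 <= q by case/andP: q01.
apply: le_trans (_ : \sum_(x : input n) prob (fun _ => q) x *
    \sum_(l | leaf_path l \subset T) ([forall e in leaf_path l, x e] : bool)%:R <= _).
  apply: ler_sum => x _; apply: ler_wpM2l; first exact: prob_ge0.
  case: (boolP (determined f T x && f x)) => [/andP[det fx]|_]; last by rewrite sumr_ge0.
  have [l /andP[lT lx]] := determined_one_witness det fx.
  by rewrite (bigD1 l) //= lx lerDl sumr_ge0.
under eq_bigr do rewrite big_distrr /=.
rewrite exchange_big /= (eq_bigr (fun _ => q ^+ d)); last first.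
  by move=> l _; rewrite sum_prob_all_ones (card_leaf_path d_gt0).
rewrite sumr_const mulr_natl; apply: ler_wpMn2l; first exact: exprn_ge0.
exact: card_leaf_paths_subset.
Qed.

End NonAdaptive.

Lemma cost_nonadaptive_ge (R : realType) (d : nat) (q : R) (s : {perm 'I_(nedges d)}) :
  (0 < d)%N -> 1 / 2 < q -> q <= 1 ->
  ((2 * q - 1) / q) ^+ 2 / (4 * q ^+ d) <=
  cost_nonadaptive (@binary_tree_fun d) (fun _ => 1) (fun _ => q) s.
Proof.
move=> d_gt0 q_gt q_le1; have q0 : 0 <= q by lra.
have q01 : 0 <= q <= 1 by rewrite q0 q_le1.
rewrite cost_nonadaptive_unit; apply: sum_ge_sqr_lb.
- by move=> k; apply: sumr_ge0 => x _; rewrite mulr_ge0 ?prob_ge0.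
- move=> k; apply: le_trans (lerB (prob_binary_tree_fun_ge d_gt0 q_gt q_le1)
    (le_trans (prob_determined_one_le d_gt0 (first_tested s k) q01) _)) _.
    by apply: ler_wpM2r; [exact: exprn_ge0 | rewrite ler_nat card_first_tested].
  rewrite -sumrB; apply: ler_sum => x _; rewrite -mulrBr ler_wpM2l ?prob_ge0 //.
  by case: determined; case: binary_tree_fun; rewrite /= ?subrr ?subr0 ?lexx ?ler01.
- by apply: exprn_gt0; lra.
- by apply: divr_gt0; lra.
- have n_ge : (2 ^ d)%:R <= (nedges d)%:R :> R by rewrite ler_nat exp2_le_nedges.
  have : 1 <= (2 ^ d)%:R * q ^+ d by rewrite natrX -exprMn exprn_ege1 //; lra.
  have : (2 ^ d)%:R * q ^+ d <= (nedges d)%:R * q ^+ d by rewrite ler_wpM2r ?exprn_ge0.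
  have : (2 * q - 1) / q <= 1 by rewrite ler_pdivrMr; lra.
  lra.
Qed.

Lemma OPT_N_ge (R : realType) (d : nat) (q : R) : (0 < d)%N -> 1 / 2 < q -> q <= 1 ->
  ((2 * q - 1) / q) ^+ 2 / (4 * q ^+ d) <= OPT_N (@binary_tree_fun d) (fun _ => 1) (fun _ => q).
Proof.
move=> d_gt0 q_gt q_le1; apply: lb_le_inf.
  by exists (cost_nonadaptive (@binary_tree_fun d) (fun _ => 1) (fun _ => q) 1%g), 1%g.
by move=> _ [s ->]; apply: cost_nonadaptive_ge.
Qed.

Local Open Scope nat_scope.

Section Reachability.
Variable d : nat.
Hypothesis d_gt0 : 0 < d.
Local Notation n := (nedges d).

Definition reach (b : nat -> bool) (w : nat) : bool :=
  [forall i : 'I_d.+1, (2 <= w %/ 2 ^ i) ==> b (w %/ 2 ^ i - 2)].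

Lemma reachP (b : nat -> bool) (w : nat) : w < 2 ^ d.+1 ->
  reflect (forall i, 2 <= w %/ 2 ^ i -> b (w %/ 2 ^ i - 2)) (reach b w).
Proof.
move=> wlt; apply: (iffP forallP) => [bw i wi|bw i]; last exact/implyP/bw.
case: (ltnP i d.+1) => id; first by have := bw (Ordinal id); rewrite /= wi.
suff : w %/ 2 ^ i = 0 by move=> w0; rewrite w0 in wi.
by apply: divn_small; apply: leq_trans wlt _; rewrite leq_exp2l.
Qed.

Lemma reach_rec (b : nat -> bool) (w : nat) : w < 2 ^ d.+1 ->
  reach b w = ((2 <= w) ==> b (w - 2)) && reach b (w %/ 2).
Proof.
move=> wlt; have w2lt : w %/ 2 < 2 ^ d.+1 by apply: leq_ltn_trans (leq_div _ _) wlt.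
apply/(reachP b wlt)/andP => [bw|[/implyP bw0 /(reachP b w2lt) bw2] i].
  split; first by apply/implyP => w2; have := bw 0; rewrite expn0 divn1; apply.
  by apply/(reachP b w2lt) => i; rewrite -divnMA -expnS; apply: bw.
by case: i => [|i]; rewrite ?expn0 ?divn1 // expnS divnMA; apply: bw2.
Qed.

Lemma reach_ancestor (b : nat -> bool) (w m : nat) : w < 2 ^ d.+1 ->
  reach b w -> reach b (w %/ 2 ^ m).
Proof.
move=> wlt /(reachP b wlt) bw.
have wmlt : w %/ 2 ^ m < 2 ^ d.+1 by apply: leq_ltn_trans (leq_div _ _) wlt.
by apply/(reachP b wmlt) => i; rewrite -divnMA -expnD; apply: bw.
Qed.

Lemma reach_path_edges (x : input n) (w : nat) : 0 < w -> w < 2 ^ d.+1 ->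
  reach (bit_at x) w = [forall e in path_edges d w (trunc_log 2 w), x e].
Proof.
move=> w0 wlt; rewrite -forall_bit_at_path_edges //.
have /andP[w1 w2] := trunc_log_bounds (ltnSn 1) w0.
apply/(reachP _ wlt)/forallP => [xw i|xw i wi].
  by apply: xw; apply: ancestor_ge2 w1 (ltn_ord i).
case: (ltnP i (trunc_log 2 w)) => iw; first exact: (xw (Ordinal iw)).
move: wi; rewrite leq_divRL ?expn_gt0 // leqNgt => /negP[].
by apply: leq_trans w2 _; rewrite mulnC -expnSr leq_exp2l.
Qed.

Lemma binary_tree_fun_reach (x : input n) :
  binary_tree_fun x = [exists l : 'I_(2 ^ d), reach (bit_at x) (leaf_node l)].
Proof.
rewrite binary_tree_funE //; apply: eq_existsb => l.
have /andP[l1 l2] := leaf_node_bounds l.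
have l0 : 0 < leaf_node l by apply: leq_trans l1; rewrite expn_gt0.
by rewrite reach_path_edges // (trunc_log_eq (ltnSn 1) (leaf_node_bounds l)).
Qed.

Lemma reach_eq (x y : input n) (w : nat) : w < 2 ^ d.+1 ->
  (forall v, 2 <= v -> v < 2 ^ d.+1 -> reach (bit_at x) (v %/ 2) ->
     bit_at x (v - 2) = bit_at y (v - 2)) ->
  reach (bit_at x) w = reach (bit_at y) w.
Proof.
move=> wlt xy; elim/ltn_ind: w wlt => w IH wlt.
case: (ltnP w 2) => w2.
  have top i : (2 <= w %/ 2 ^ i) = false by rewrite leqNgt (leq_ltn_trans (leq_div _ _) w2).
  by apply/(reachP _ wlt)/(reachP _ wlt) => _ i; rewrite top.
have w2lt : w %/ 2 < 2 ^ d.+1 by apply: leq_ltn_trans (leq_div _ _) wlt.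
have ww2 : w %/ 2 < w := ltn_Pdiv (ltnSn 1) (ltnW w2).
rewrite !(reach_rec _ wlt) -(IH _ ww2 w2lt) w2 /=.
by case xw: (reach (bit_at x) (w %/ 2)); rewrite ?andbF // (xy w w2 wlt xw).
Qed.

End Reachability.

Section Exploration.
Variable d : nat.
Hypothesis d_gt0 : 0 < d.
Local Notation n := (nedges d).
Local Notation f := (@binary_tree_fun d).

Definition known (A : {set 'I_n}) (k : nat) : bool := [exists e in A, val e == k].

(* Edge [e] enters node [e + 2]; this is the node it hangs from. *)
Definition top_node (e : 'I_n) : nat := (val e + 2) %/ 2.

Definition open_edge (x : input n) (e : 'I_n) : bool := reach d (bit_at x) (top_node e).

(* Scan the edges in heap order, testing an edge iff the edges already found
   to be [1] (the set [A]) connect its top node to the root. *)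
Fixpoint explore (s : seq 'I_n) (A : {set 'I_n}) : dtree n :=
  match s with
  | [::] => Leaf n
  | e :: s' => if reach d (known A) (top_node e)
               then Node e (explore s' A) (explore s' (e |: A)) else explore s' A
  end.

Lemma top_node_lt (e : 'I_n) : top_node e < 2 ^ d.+1.
Proof.
rewrite /top_node -nedgesE; apply: leq_ltn_trans (leq_div _ _) _.
by rewrite addn2 ltnS ltnS ltn_ord.
Qed.

Lemma determined_of_open (x : input n) (S : {set 'I_n}) :
  (forall e, open_edge x e -> e \in S) -> determined f S x.
Proof.
move=> openS; apply/forallP => y; apply/implyP => /forall_inP xy.
rewrite !binary_tree_fun_reach //; apply/eqP; apply: eq_existsb => l.
have /andP[_ l2] := leaf_node_bounds l.
apply/esym; apply: reach_eq => // v v2 vlt xv.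
have vn : v - 2 < n by rewrite -(ltn_add2r 2) !addn2 nedgesE; lia.
have eS : Ordinal vn \in S by apply: openS; rewrite /open_edge /top_node /= subnK.
by rewrite !(bit_at_ord _ vn) (eqP (xy _ eS)).
Qed.

Lemma open_of_known (A : {set 'I_n}) (x : input n) (e : 'I_n) :
  (forall e', e' \in A -> x e') -> reach d (known A) (top_node e) -> open_edge x e.
Proof.
move=> Ax; have elt := top_node_lt e.
move=> /(reachP _ elt) Ae; apply/(reachP _ elt) => i ei.
have /existsP[e' /andP[e'A /eqP <-]] := Ae i ei.
by rewrite bit_atE Ax.
Qed.

(* Ancestor edges of [e] come before [e] in heap order, so once all open
   [1]-edges before [e] are known, the known part decides whether [e] is open. *)
Lemma reach_known_eq (e : 'I_n) (A : {set 'I_n}) (x : input n) :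
  (forall e', e' \in A -> x e') ->
  (forall e' : 'I_n, val e' < val e -> open_edge x e' -> x e' -> e' \in A) ->
  reach d (known A) (top_node e) = open_edge x e.
Proof.
move=> Ax before; apply/idP/idP; first exact: open_of_known.
have elt := top_node_lt e; move=> /(reachP _ elt) xe; apply/(reachP _ elt) => i ei.
pose e' := Ordinal (ancestor_edge_lt d_gt0 i elt).
have xe' : x e' by rewrite -bit_atE; apply: xe.
have e'e : val e' < val e.
  have := leq_div (top_node e) (2 ^ i); have : top_node e * 2 <= val e + 2 by apply: leq_trunc_div.
  by rewrite /=; move: ei; move: (top_node e %/ 2 ^ i) (top_node e) (val e) => a b c; lia.
have e'open : open_edge x e'.
  rewrite /open_edge /top_node /= subnK // -divnMA -expnSr.
  by apply: reach_ancestor => //; apply/(reachP _ elt).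
by apply/existsP; exists e'; rewrite /= eqxx andbT; apply: before.
Qed.

Lemma run_ok_explore (x : input n) (s : seq 'I_n) (A S : {set 'I_n}) :
  sorted (fun a b : 'I_n => a < b) s ->
  (forall e, e \in A -> x e) ->
  (forall e, e \notin s -> open_edge x e -> e \in S) ->
  (forall e, e \notin s -> open_edge x e -> x e -> e \in A) ->
  run_ok f (explore s A) x S.
Proof.
elim: s A S => [|e s IH] A S s_sorted Ax openS openA /=.
  by rewrite determined_of_open // => e'; apply: openS.
have lt_trans : transitive (fun a b : 'I_n => a < b) by move=> b a c; apply: ltn_trans.
have e_min : all (fun e' : 'I_n => e < e') s by apply: order_path_min lt_trans s_sorted.
have earlier (e' : 'I_n) : e' < e -> e' \notin e :: s.
  move=> e'e; rewrite inE negb_or; apply/andP; split; first by rewrite neq_ltn e'e.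
  by apply/negP => /(allP e_min) ee'; have := ltn_trans e'e ee'; rewrite ltnn.
have later (e' : 'I_n) : e' != e -> e' \notin s -> e' \notin e :: s.
  by move=> ne; rewrite inE negb_or ne.
have {}s_sorted := path_sorted s_sorted.
rewrite (reach_known_eq Ax (fun e' e'e => openA e' (earlier e' e'e))).
case: (boolP (open_edge x e)) => [open_e|closed_e]; last first.
  apply: IH => // e' e's; case: (eqVneq e' e) => [->|ne]; rewrite ?(negbTE closed_e) //.
    by apply: openS; apply: later.
  by apply: openA; apply: later.
apply/orP; right; case: (boolP (x e)) => xe; apply: IH => // e'.
- by rewrite !inE => /orP[/eqP->|/Ax].
- by rewrite !inE => e's open_e'; case: (eqVneq e' e) => //= ne; apply: openS; rewrite ?later.
- by rewrite !inE => e's open_e' xe'; case: (eqVneq e' e) => //= ne; apply: openA; rewrite ?later.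
- by rewrite !inE => e's open_e'; case: (eqVneq e' e) => //= ne; apply: openS; rewrite ?later.
- move=> e's open_e' xe'; case: (eqVneq e' e) => [ee|ne]; first by rewrite -ee xe' in xe.
  by apply: openA; rewrite ?later.
Qed.

Definition explore_tree : dtree n := explore (enum 'I_n) finset.set0.

Lemma explore_tree_valid : valid_tree f explore_tree.
Proof.
move=> x; apply: run_ok_explore => [|e|e|e]; rewrite ?mem_enum ?inE //.
by have := iota_ltn_sorted 0 n; rewrite -val_enum_ord sorted_map.
Qed.

End Exploration.
Local Open Scope ring_scope.

Lemma run_cost_ge0 (R : realType) (n : nat) (f : input n -> bool) (c : 'I_n -> R)
    (t : dtree n) (x : input n) (S : {set 'I_n}) :
  (forall i, 0 <= c i) -> 0 <= run_cost f c t x S.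
Proof.
move=> c0; elim: t S => [|e t0 IH0 t1 IH1] S /=; first by case: determined.
by case: determined => //; rewrite addr_ge0 //; case: (x e).
Qed.

Lemma run_cost_explore_le (R : realType) (d : nat) (x : input (nedges d))
    (s : seq 'I_(nedges d)) (A S : {set 'I_(nedges d)}) :
  (forall e, e \in A -> x e) ->
  run_cost (@binary_tree_fun d) (fun _ => 1 : R) (explore s A) x S <=
  \sum_(e <- s) (open_edge x e : bool)%:R.
Proof.
elim: s A S => [|e s IH] A S Ax /=; first by rewrite big_nil; case: determined.
have rest_ge0 : 0 <= \sum_(e <- s) (open_edge x e : bool)%:R :> R by rewrite sumr_ge0.
rewrite big_cons; case: (boolP (reach d (known A) (top_node e))) => [Ae|_]; last first.
  by apply: le_trans (IH A S Ax) _; rewrite lerDr.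
rewrite /= (open_of_known Ax Ae).
case: determined; first by rewrite addr_ge0.
rewrite /= mulr1n lerD2l; case: (boolP (x e)) => xe; last exact: IH.
by apply: IH => e'; rewrite !inE => /orP[/eqP->|/Ax].
Qed.

Lemma prob_open_edge (R : realType) (d : nat) (q : R) (e : 'I_(nedges d)) : (0 < d)%N ->
  \sum_(x : input (nedges d)) prob (fun _ => q) x * (open_edge x e : bool)%:R =
  q ^+ trunc_log 2 (top_node e).
Proof.
move=> d_gt0; have elt := top_node_lt e.
have e0 : (0 < top_node e)%N by rewrite /top_node divn_gt0 // addn2.
have /andP[e1 _] := trunc_log_bounds (ltnSn 1) e0.
rewrite -(card_path_edges d_gt0 e1 elt) -sum_prob_all_ones; apply: eq_bigr => x _.
by rewrite /open_edge reach_path_edges.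
Qed.

(* Level [j] of the tree has [2^(j+1)] edges hanging from nodes of depth [j]. *)
Lemma sum_exp_depth (R : realType) (q : R) (D : nat) :
  \sum_(0 <= e < nedges D) q ^+ trunc_log 2 ((e + 2) %/ 2) = \sum_(j < D) (2 ^ j.+1)%:R * q ^+ j.
Proof.
rewrite /nedges; elim: D => [|D IH]; first by rewrite big_ord0 big_geq.
rewrite big_ord_recr /= -IH.
have D2 : (2 <= 2 ^ D.+1)%N by rewrite -[2%N]expn1 leq_exp2l.
have D12 : (2 ^ D.+1 - 2 <= 2 ^ D.+2 - 2)%N by rewrite leq_sub2r // leq_exp2l.
rewrite (big_cat_nat (leq0n _) D12) /=; congr (_ + _).
rewrite (eq_big_nat _ _ (F2 := fun _ => q ^+ D)); last first.
  move=> e /andP[e1 e2]; congr (_ ^+ _); apply: trunc_log_eq => //.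
  rewrite leq_divRL // ltn_divLR // -!expnSr; apply/andP; split.
    by move: e1; rewrite expnS; lia.
  by move: e2; rewrite !expnS; lia.
by rewrite sumr_const_nat mulr_natl; congr (_ *+ _); rewrite !expnS; lia.
Qed.

Lemma sum_exp_le (R : realType) (r : R) (D : nat) :
  1 < r -> \sum_(j < D) r ^+ j <= r ^+ D / (r - 1).
Proof.
move=> r1; rewrite ler_pdivlMr ?subr_gt0 // mulrC -subrX1.
by rewrite lerBlDr lerDl.
Qed.

Lemma cost_explore_tree_le (R : realType) (d : nat) (q : R) : (0 < d)%N -> 1 / 2 < q -> q <= 1 ->
  cost_adaptive (@binary_tree_fun d) (fun _ => 1) (fun _ => q) (explore_tree d) <=
  2 * (2 * q) ^+ d / (2 * q - 1).
Proof.
move=> d_gt0 q_gt q_le1; have q01 : 0 <= q <= 1 by apply/andP; split; lra.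
apply: le_trans (_ : \sum_(x : input (nedges d)) prob (fun _ => q) x *
    \sum_(e <- enum 'I_(nedges d)) (open_edge x e : bool)%:R <= _).
  apply: ler_sum => x _; apply: ler_wpM2l; first exact: prob_ge0.
  by apply: run_cost_explore_le => e; rewrite inE.
under eq_bigr do rewrite big_distrr /=.
rewrite exchange_big /= big_enum /=.
under eq_bigr do rewrite prob_open_edge //.
rewrite -(big_mkord xpredT (fun e => q ^+ trunc_log 2 ((e + 2) %/ 2))) sum_exp_depth.
have -> : \sum_(j < d) (2 ^ j.+1)%:R * q ^+ j = 2 * \sum_(j < d) (2 * q) ^+ j.
  by rewrite big_distrr /=; apply: eq_bigr => j _; rewrite exprMn natrX exprS; ring.
by rewrite -mulrA ler_pM2l; [apply: sum_exp_le; lra | lra].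
Qed.

Lemma cost_adaptive_ge0 (R : realType) (n : nat) (f : input n -> bool) (p : 'I_n -> R)
    (t : dtree n) :
  (forall i, 0 <= p i <= 1) -> 0 <= cost_adaptive f (fun _ => 1) p t.
Proof. by move=> p01; apply: sumr_ge0 => x _; rewrite mulr_ge0 ?prob_ge0 ?run_cost_ge0. Qed.

Lemma OPT_A_ge0 (R : realType) (n : nat) (f : input n -> bool) (p : 'I_n -> R) :
  (forall i, 0 <= p i <= 1) -> (exists t, valid_tree f t) -> 0 <= OPT_A f (fun _ => 1) p.
Proof.
move=> p01 [t t_valid]; apply: lb_le_inf; first by exists (cost_adaptive f (fun _ => 1) p t), t.
by move=> _ [t' [_ ->]]; apply: cost_adaptive_ge0.
Qed.

Lemma OPT_A_le (R : realType) (d : nat) (q : R) : (0 < d)%N -> 1 / 2 < q -> q <= 1 ->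
  OPT_A (@binary_tree_fun d) (fun _ => 1) (fun _ => q) <= 2 * (2 * q) ^+ d / (2 * q - 1).
Proof.
move=> d_gt0 q_gt q_le1; have q01 : 0 <= q <= 1 by apply/andP; split; lra.
apply: le_trans (cost_explore_tree_le d_gt0 q_gt q_le1).
apply: ge_inf; last by exists (explore_tree d); split => //; apply: explore_tree_valid.
by exists 0 => _ [t [_ ->]]; apply: cost_adaptive_ge0.
Qed.

Lemma powR_nedges_le (R : realType) (eps : R) (d : nat) : 0 < eps -> (0 < d)%N ->
  (nedges d)%:R `^ (1 - 2 * eps / ln 2) <= 2 * (2 ^ d)%:R / ((1 + eps) ^+ d) ^+ 2.
Proof.
move=> eps_gt0 d_gt0; set T : R := (2 ^ d)%:R; set m : R := (nedges d)%:R.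
have T_gt0 : 0 < T by rewrite /T ltr0n expn_gt0.
have Tm : T <= m by rewrite /T /m ler_nat exp2_le_nedges.
have m2T : m <= 2 * T by rewrite /T /m -natrM ler_nat nedges_le.
have ln2 : 0 < ln (2 : R) by rewrite ln_gt0 // ltr1n.
have m_gt0 : 0 < m by apply: lt_le_trans Tm.
have lnT : ln T = d%:R * ln 2 by rewrite /T natrX lnXn // mulr_natl.
have ln_m_le : ln m <= ln (2 * T) by rewrite ler_ln // posrE // mulr_gt0.
have ln_m_ge : ln T <= ln m by rewrite ler_ln // posrE.
have exponent_le : (1 - 2 * eps / ln 2) * ln m <= ln (2 * T) - 2 * eps * d%:R.
  have : 2 * eps / ln 2 * ln T <= 2 * eps / ln 2 * ln m.
    by rewrite ler_pM2l // divr_gt0 // mulr_gt0.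
  have -> : 2 * eps / ln 2 * ln T = 2 * eps * d%:R by rewrite lnT; field; lra.
  by rewrite mulrBl mul1r; lra.
rewrite /powR (negbTE (lt0r_neq0 m_gt0)).
apply: le_trans (_ : expR (ln (2 * T) - 2 * eps * d%:R) <= _); first by rewrite ler_expR.
rewrite expRB lnK ?posrE ?mulr_gt0 // ler_pdivlMr ?exprn_gt0 ?ltr_pwDl //; last lra.
rewrite mulrAC ler_pdivrMr ?expR_gt0 // ler_pM2l ?mulr_gt0 //.
have -> : 2 * eps * d%:R = eps * (d * 2)%:R by rewrite natrM; ring.
rewrite -exprM expRM_natr; apply: lerXn2r; rewrite ?nnegrE; [lra | exact: expR_ge0 |].
exact: expR_ge1Dx.
Qed.

Lemma combine_bounds (R : realType) (eps T P X OA ON : R) :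
  0 < eps -> eps <= 1 / 2 -> 0 < T -> 0 < P ->
  0 <= X -> X <= 2 * T / P ^+ 2 -> 0 <= OA -> OA <= 2 * P / eps ->
  eps ^+ 2 * T / ((1 + eps) ^+ 2 * P) <= ON -> 1 / 9 * eps ^+ 3 * X * OA <= ON.
Proof.
move=> eps_gt0 eps_le T_gt0 P_gt0 X0 X_le OA0 OA_le ON_ge; apply: le_trans ON_ge.
have c0 : 0 <= 1 / 9 * eps ^+ 3 by rewrite mulr_ge0 ?exprn_ge0 //; lra.
apply: le_trans (_ : 1 / 9 * eps ^+ 3 * (2 * T / P ^+ 2) * (2 * P / eps) <= _).
  by apply: ler_pM => //; [rewrite mulr_ge0 | rewrite ler_wpM2l].
set K := eps ^+ 2 * T / P; have K_gt0 : 0 < K by rewrite divr_gt0 ?mulr_gt0 ?exprn_gt0.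
have -> : 1 / 9 * eps ^+ 3 * (2 * T / P ^+ 2) * (2 * P / eps) = 4 / 9 * K.
  by rewrite /K; field; apply/andP; split; apply/eqP; lra.
have -> : eps ^+ 2 * T / ((1 + eps) ^+ 2 * P) = K / (1 + eps) ^+ 2.
  by rewrite /K; field; apply/andP; split; apply/eqP; rewrite ?expf_neq0 //; lra.
have sq : (1 + eps) ^+ 2 <= 9 / 4 by rewrite expr2; nra.
by rewrite ler_pdivlMr ?exprn_gt0 ?ltr_pwDl //; nra.
Qed.

Theorem theorem6 :
  exists c0 : Rdefinitions.R, 0 < c0 /\
  forall (eps : Rdefinitions.R) (d : nat), 0 < eps -> eps <= 1 / 2 -> (1 <= d)%N ->
    let n := nedges d in
    let f := @binary_tree_fun d in
    let c := fun _ : 'I_n => (1 : Rdefinitions.R) in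
    let p := fun _ : 'I_n => (1 + eps) / 2 in
    OPT_N f c p >=
      c0 * eps ^+ 3 * ((n%:R : Rdefinitions.R) `^ (1 - 2 * eps / ln 2)) * OPT_A f c p.
Proof.
exists (1 / 9); split; first lra.
move=> eps d eps_gt0 eps_le d_gt0; cbv zeta.
have q_gt : 1 / 2 < (1 + eps) / 2 by lra.
have q_le1 : (1 + eps) / 2 <= 1 by lra.
have q01 : 0 <= (1 + eps) / 2 <= 1 by apply/andP; split; lra.
have twice_q : 2 * ((1 + eps) / 2) = 1 + eps by field.
have gap : 2 * ((1 + eps) / 2) - 1 = eps by field.
apply: (combine_bounds eps_gt0 eps_le _ _ (powR_ge0 _ _) (powR_nedges_le eps_gt0 d_gt0)
  (OPT_A_ge0 (fun _ => q01) (ex_intro _ _ (explore_tree_valid d_gt0)))).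
- by rewrite ltr0n expn_gt0.
- by apply: exprn_gt0; lra.
- by move: (OPT_A_le d_gt0 q_gt q_le1); rewrite gap twice_q.
- apply: le_trans (OPT_N_ge d_gt0 q_gt q_le1); rewrite gap natrX !expr_div_n.
  rewrite le_eqVlt; apply/orP; left; apply/eqP.
  by field; rewrite !expf_neq0 //; lra.
Qed.
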